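(* Let $\pi\in[0,1]$, $\epsilon\in\left[0,\tfrac12\right]$, $g>0$ and $c\ge 0$ with $c<(1-\pi)(1-\epsilon)-\pi\epsilon g$. Let $\tilde h\in(0,1)$. Define, for $h\in[0,1]$, the expected aggregate production $$F(h)=\begin{cases}(1-h)+h\left[(1+\pi g)(1-\epsilon)+\pi\epsilon\right] & h<\tilde h \quad(\text{agents exert effort}),\\ (1-h)+h\pi(1+g) & h>\tilde h\quad(\text{agents shirk}),\end{cases}$$ and the expected welfare $$W(h)=\begin{cases}(1-h)+h\left[(1+\pi g)(1-\epsilon)+\pi\epsilon-c\right] & h<\tilde h,\\ (1-h)+h\pi(1+g) & h>\tilde h.\end{cases}$$ Then expected production and welfare drop as $h$ surpasses $\tilde h$: $\lim_{h\uparrow\tilde h}F(h)>\lim_{h\downarrow\tilde h}F(h)$ and $\lim_{h\uparrow\tilde h}W(h)>\lim_{h\downarrow\tilde h}W(h)$.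
   Context: Model: a unit mass of agents; agents $i\le h$ have access to a new technology that is good with probability $\pi$ (production $1+g$ if used and good, $0$ if used and bad, $1$ if not used). Agents who exert effort pay $c$ and obtain a signal that is wrong with probability $\epsilon$, which they follow; agents who shirk use the technology. $\tilde h$ is the threshold of the principal's firing policy: below it she credibly threatens punishment and agents exert effort, above it she does not and agents shirk. Welfare is output less agents' effort costs. *)

From mathcomp Require Import all_boot all_order all_algebra.
From mathcomp Require Import all_classical all_reals all_analysis.
Set Implicit Arguments. Unset Strict Implicit. Unset Printing Implicit Defensive.
Import Order.TTheory GRing.Theory Num.Theory.
Local Open Scope ring_scope.

(* The value at h = ht itself is irrelevant for the one-sided
   limits (the paper leaves it unspecified); we use the shirk branch. *)
Definition production {R : realType} (pi eps g ht : R) (h : R) : R :=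
  if h < ht then (1 - h) + h * ((1 + pi * g) * (1 - eps) + pi * eps)
  else (1 - h) + h * (pi * (1 + g)).

Definition welfare {R : realType} (pi eps g c ht : R) (h : R) : R :=
  if h < ht then (1 - h) + h * ((1 + pi * g) * (1 - eps) + pi * eps - c)
  else (1 - h) + h * (pi * (1 + g)).

(* Both one-sided limits are obtained by evaluating the affine branch that is
   active on that side at [ht], so the drop at [ht] equals [ht] times the
   per-agent gap between effort and shirking.  For production this gap is
   [(1 - pi) (1 - eps) - pi eps g], which exceeds [c >= 0]; for welfare it is
   that quantity minus [c]. *)
From mathcomp Require Import all_boot all_order all_algebra.
From mathcomp Require Import all_classical all_reals all_analysis.
From mathcomp Require Import ring.
Import Order.TTheory GRing.Theory Num.Theory numFieldNormedType.Exports.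
Local Open Scope ring_scope.
Local Open Scope classical_set_scope.

Section PiecewiseOneSidedLimits.
Variables (R : realType) (x : R).

Lemma cvg_at_left_iflt (f k : R -> R) (l : R) :
  f h @[h --> x^'-] --> l ->
  (if h < x then f h else k h) @[h --> x^'-] --> l.
Proof.
move=> fl; apply: cvg_trans fl; apply: near_eq_cvg; near=> h.
have -> : h < x by near: h; exact: nbhs_left_lt.
by [].
Unshelve. all: by end_near.
Qed.

Lemma cvg_at_right_iflt (f k : R -> R) (l : R) :
  k h @[h --> x^'+] --> l ->
  (if h < x then f h else k h) @[h --> x^'+] --> l.
Proof.
move=> kl; apply: cvg_trans kl; apply: near_eq_cvg; near=> h.
have xh : x < h by near: h; exact: nbhs_right_gt.
by rewrite ltNge (ltW xh).
Unshelve. all: by end_near.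
Qed.

End PiecewiseOneSidedLimits.

Lemma mix1_continuous (R : realType) (a : R) :
  continuous (fun h : R => (1 - h) + h * a).
Proof.
move=> h; apply: cvgD; first by apply: cvgB; [exact: cvg_cst | exact: cvg_id].
by apply: cvgM; [exact: cvg_id | exact: cvg_cst].
Qed.

Lemma ltr_mix1 (R : realType) (h a b : R) :
  0 < h -> b < a -> (1 - h) + h * b < (1 - h) + h * a.
Proof. by move=> h_gt0 ba; rewrite ltrD2l ltr_pM2l. Qed.

Lemma effort_shirk_gap (R : realType) (pi eps g : R) :
  (1 + pi * g) * (1 - eps) + pi * eps - pi * (1 + g)
  = (1 - pi) * (1 - eps) - pi * eps * g.
Proof. by ring. Qed.

Theorem corollary1 (R : realType) (pi eps g c ht : R)
  (Hpi0 : 0 <= pi) (Hpi1 : pi <= 1)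
  (Heps0 : 0 <= eps) (Heps1 : eps <= 1 / 2)
  (Hg : 0 < g) (Hc0 : 0 <= c)
  (Hc : c < (1 - pi) * (1 - eps) - pi * eps * g)
  (Hht0 : 0 < ht) (Hht1 : ht < 1) :
  (exists lL lR : R,
      production pi eps g ht h @[h --> ht^'-] --> lL /\
      production pi eps g ht h @[h --> ht^'+] --> lR /\ lR < lL) /\
  (exists lL lR : R,
      welfare pi eps g c ht h @[h --> ht^'-] --> lL /\
      welfare pi eps g c ht h @[h --> ht^'+] --> lR /\ lR < lL).
Proof.
have gap_gt_c : c < (1 + pi * g) * (1 - eps) + pi * eps - pi * (1 + g).
  by rewrite effort_shirk_gap.
split; do 2 eexists; split.
- exact/cvg_at_left_iflt/cvg_at_left_filter/mix1_continuous.
- split; first exact/cvg_at_right_iflt/cvg_at_right_filter/mix1_continuous.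
  by apply: ltr_mix1 => //; rewrite -subr_gt0; apply: le_lt_trans gap_gt_c.
- exact/cvg_at_left_iflt/cvg_at_left_filter/mix1_continuous.
- split; first exact/cvg_at_right_iflt/cvg_at_right_filter/mix1_continuous.
  by apply: ltr_mix1 => //; rewrite -subr_gt0 addrAC subr_gt0.
Qed.
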